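(* Let $H$ be a BF-monoid and consider the conditions: \begin{itemize} \item[(a)] There are submonoids $H_1,H_2\subseteq H$ such that $H=H_1\times H_2$ (internal direct product), where $H_1$ is half-factorial but not a group. \item[(b)] For every rational number $q$ with $1<q<\rho(H)$ there is $c\in H$ such that $\rho(\mathsf L(c^k))=\rho(\mathsf L(c))>q$ for all $k\in\mathbb N$. \item[(b')] (With $H_2$ as in (a).) For every $m\in\mathbb N_{\ge 2}$ there is $L\in\mathcal L(H_2)$ with $\min L=2$ and $\max L=m$. \end{itemize} Then: condition (a) holds whenever $H$ has a cancellative prime element $p$ (with $H_1$ the free abelian monoid generated by $p$ and $H_2=\{a\in H: p\nmid a\}$); condition (b) holds whenever $H$ has accepted elasticity. If conditions (a) and (b) hold, or conditions (a) and (b') hold, then $H$ is fully elastic.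
   Context: A monoid means a commutative semigroup $H$ with identity which is unit-cancellative (if $a=au$ then $u\in H^\times$, the group of units). An atom is a non-unit $u$ such that $u=ab$ implies $a$ or $b$ is a unit. For $a\in H$, $\mathsf L(a)\subseteq\mathbb N_0$ is the set of all $\ell$ such that $a=\varepsilon u_1\cdots u_\ell$ with $\varepsilon\in H^\times$ and atoms $u_i$; $\mathcal L(H)=\{\mathsf L(a):a\in H\}$. $H$ is a BF-monoid if every $\mathsf L(a)$ is finite and nonempty, and half-factorial if $|\mathsf L(a)|=1$ for all $a$. For a finite nonempty $L\subseteq\mathbb N$, $\rho(L)=\max L/\min L$, and $\rho(\{0\})=1$; $\rho(H)=\sup\{\rho(L):L\in\mathcal L(H)\}$. $H$ has accepted elasticity if $\rho(L)=\rho(H)$ for some $L\in\mathcal L(H)$. $H$ is fully elastic if for every rational $q$ with $1<q<\rho(H)$ there is $L\in\mathcal L(H)$ with $\rho(L)=q$. An element $p$ is prime if it is a non-unit and $p\mid ab$ implies $p\mid a$ or $p\mid b$; it is cancellative if $pb=pc$ implies $b=c$. *)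

From HB Require Import structures.
From mathcomp Require Import all_boot all_order all_algebra.
From mathcomp Require Import boolp classical_sets reals constructive_ereal ereal.
Set Implicit Arguments. Unset Strict Implicit. Unset Printing Implicit Defensive.
Import Order.TTheory GRing.Theory Num.Theory.
Local Open Scope classical_set_scope.
Local Open Scope ring_scope.

Section Monoids.
Variables (T : Type) (mul : T -> T -> T) (e : T).

Definition mpow (a : T) (k : nat) : T := iter k (mul a) e.

Definition mprod (s : seq T) : T := foldr mul e s.

(* Notions relative to a submonoid S of T (S = setT gives the whole monoid). *)
Definition is_unit_in (S : set T) (u : T) : Prop :=
  S u /\ exists2 v, S v & mul u v = e.

Definition is_atom_in (S : set T) (u : T) : Prop :=
  [/\ S u, ~ is_unit_in S u &
  forall a b, S a -> S b -> u = mul a b -> is_unit_in S a \/ is_unit_in S b].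

Definition lengths_in (S : set T) (a : T) : set nat :=
  [set l | exists eps, exists s : seq T,
      [/\ is_unit_in S eps, (forall i, (i < size s)%N -> is_atom_in S (nth e s i)),
          size s = l & a = mul eps (mprod s)]].

Definition submonoid (S : set T) : Prop :=
  S e /\ forall a b, S a -> S b -> S (mul a b).

(* (T, mul, e) is a monoid in the sense of the paper: commutative semigroup
   with identity, unit-cancellative. *)
Definition is_monoid : Prop :=
  [/\ forall a b, mul a b = mul b a,
      forall a b c, mul a (mul b c) = mul (mul a b) c,
      forall a, mul e a = a &
      forall a u, a = mul a u -> is_unit_in setT u].

Definition finite_nat_set (L : set nat) : Prop := exists N, forall l, L l -> (l <= N)%N.

Definition BF_monoid : Prop :=
  is_monoid /\ forall a, finite_nat_set (lengths_in setT a) /\ lengths_in setT a !=set0.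

Definition half_factorial_in (S : set T) : Prop :=
  forall a, S a -> exists l, lengths_in S a = [set l].

Definition divides (p a : T) : Prop := exists c, a = mul p c.

Definition is_prime (p : T) : Prop :=
  ~ is_unit_in setT p /\ forall a b, divides p (mul a b) -> divides p a \/ divides p b.

Definition cancellative (p : T) : Prop := forall b c, mul p b = mul p c -> b = c.

Definition internal_direct_product (H1 H2 : set T) : Prop :=
  [/\ submonoid H1, submonoid H2 &
      forall a, exists a1 a2, [/\ H1 a1, H2 a2, a = mul a1 a2 &
        forall b1 b2, H1 b1 -> H2 b2 -> a = mul b1 b2 -> b1 = a1 /\ b2 = a2]].

Variable R : realType.

Definition rho (L : set nat) : R :=
  if `[< L = [set 0%N] >] then 1
  else sup [set (n%:R : R) | n in L] / inf [set (n%:R : R) | n in L].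

Definition elasticity : \bar R :=
  ereal_sup [set (rho (lengths_in setT a))%:E | a in [set: T]].

Definition accepted_elasticity : Prop :=
  exists a, (rho (lengths_in setT a))%:E = elasticity.

Definition fully_elastic : Prop :=
  forall q : rat, 1 < q -> ((ratr q : R)%:E < elasticity)%E ->
    exists a, rho (lengths_in setT a) = ratr q.

Definition cond_a (H1 H2 : set T) : Prop :=
  [/\ internal_direct_product H1 H2, half_factorial_in H1 &
      exists a, H1 a /\ ~ is_unit_in H1 a].

Definition cond_b : Prop :=
  forall q : rat, 1 < q -> ((ratr q : R)%:E < elasticity)%E ->
    exists c, forall k, (0 < k)%N ->
      rho (lengths_in setT (mpow c k)) = rho (lengths_in setT c) /\
      ratr q < rho (lengths_in setT c).

Definition cond_b' (H2 : set T) : Prop :=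
  forall m : nat, (2 <= m)%N -> exists a, H2 a /\
    let L := lengths_in H2 a in
    [/\ L 2%N, L m & forall l, L l -> (2 <= l <= m)%N].

End Monoids.

(* Write L(a) for the set of lengths of a in H and rho(L) = max L / min L.
   - For a set of positive lengths with extremes m <= M, rho = M/m; a rational
     q > 1 is a fraction r/s with 0 < s < r.
   - In a commutative monoid lengths add under products, so k L(c) is
     contained in L(c^k).
   - If H = H1 x H2, an atom of H is an atom of one factor times a unit of the
     other, so L(y1 y2) = L_H1(y1) + L_H2(y2).  If moreover H1 is half-factorial
     with an atom u, then L(u^n x) = n + L(x), and L(a) = L_H2(a) for a in H2.
     Hence rho(L(u^n x)) = (n + M)/(n + m) when L(x) has extremes m <= M; a
     suitable n realizes any fraction r/s, using x = c^(r - s) from (b), resp.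
     x in H2 with extremes 2 and 2(r - s) + 2 from (b').
   - Since rho(L(c)) <= rho(L(c^k)) <= rho(H), accepted elasticity gives (b).
   - For a cancellative prime p every a is uniquely p^n c with p not dividing
     c (the exponent is bounded by the lengths of a), which gives (a). *)
From HB Require Import structures.
From mathcomp Require Import all_boot all_order all_algebra zify.
From mathcomp Require Import boolp classical_sets reals constructive_ereal ereal.
Set Implicit Arguments. Unset Strict Implicit. Unset Printing Implicit Defensive.
Import Order.TTheory GRing.Theory Num.Theory.
Local Open Scope classical_set_scope.

Definition has_extremes (L : set nat) (m M : nat) : Prop :=
  [/\ L m, L M & forall l, L l -> (m <= l <= M)%N].

Lemma ex_min_nat (P : nat -> Prop) n0 : P n0 ->
  exists m, P m /\ forall l, P l -> (m <= l)%N.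
Proof.
move=> P0; have ex : exists i, `[< P i >] by exists n0; apply/asboolP.
case: (ex_minnP ex) => m /asboolP Pm Hm; exists m; split => // l Pl.
by apply: Hm; apply/asboolP.
Qed.

Lemma ex_max_nat (P : nat -> Prop) n0 N : P n0 -> (forall l, P l -> (l <= N)%N) ->
  exists M, P M /\ forall l, P l -> (l <= M)%N.
Proof.
move=> P0 PN; have ex : exists i, `[< P i >] by exists n0; apply/asboolP.
have ub i : `[< P i >] -> (i <= N)%N by move/asboolP; apply: PN.
case: (ex_maxnP ex ub) => M /asboolP PM HM; exists M; split => // l Pl.
by apply: HM; apply/asboolP.
Qed.

Section Rho.
Variable R : realType.
Local Open Scope ring_scope.

Lemma rho_extremes (L : set nat) m M : has_extremes L m M -> (0 < m)%N ->
  rho R L = M%:R / m%:R.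
Proof.
move=> [Lm LM Hb] m0; rewrite /rho asboolF; last first.
  by move=> HL; rewrite HL in Lm; rewrite Lm in m0.
set E := [set (n%:R : R) | n in L].
have nE : E !=set0 by exists M%:R, M.
have ubE : ubound E M%:R by move=> _ [n Ln <-]; rewrite ler_nat; case/andP: (Hb n Ln).
have lbE : lbound E m%:R by move=> _ [n Ln <-]; rewrite ler_nat; case/andP: (Hb n Ln).
have -> : sup E = M%:R.
  apply/eqP; rewrite eq_le; apply/andP; split; first exact: ge_sup.
  by apply: ub_le_sup; [exists M%:R | exists M].
have -> // : inf E = m%:R.
apply/eqP; rewrite eq_le; apply/andP; split; last exact: lb_le_inf.
by apply: ge_inf; [exists m%:R | exists m].
Qed.

Lemma rho_0 : rho R [set 0%N] = 1.
Proof. by rewrite /rho asboolT. Qed.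

Lemma rat_gt1_fraction (q : rat) : 1 < q ->
  exists r s, [/\ (0 < s)%N, (s < r)%N & (ratr q : R) = r%:R / s%:R].
Proof.
move=> q1; exists `|numq q|%N, `|denq q|%N.
have q0 : 0 <= numq q by rewrite numq_ge0 ltW // (lt_trans ltr01 q1).
have E : (ratr q : R) = (`|numq q|%N)%:R / (`|denq q|%N)%:R.
  rewrite -{1}[q]divq_num_den fmorph_div !rmorph_int.
  rewrite -[X in X%:~R / _](gez0_abs q0).
  by rewrite -[X in _ / X%:~R](gez0_abs (m := denq q)) ?ltW ?denq_gt0 // -!pmulrn.
have s0 : (0 < `|denq q|)%N by rewrite absz_gt0 gt_eqF ?denq_gt0.
split => //.
have : (1 : R) < ratr q by rewrite -(rmorph1 (@ratr R)) ltr_rat.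
by rewrite E ltr_pdivlMr ?ltr0n // mul1r ltr_nat.
Qed.

Lemma nat_frac_eq a b c d : (0 < b)%N -> (0 < d)%N ->
  (a * d = c * b)%N -> a%:R / b%:R = c%:R / d%:R :> R.
Proof.
by move=> b0 d0 E; apply/eqP; rewrite eqr_div ?pnatr_eq0 -?lt0n // -!natrM E.
Qed.

Lemma nat_frac_le a b c d : (0 < b)%N -> (0 < d)%N ->
  (a%:R / b%:R <= c%:R / d%:R :> R) = (a * d <= c * b)%N.
Proof.
by move=> b0 d0; rewrite ler_pdivrMr ?ltr0n // mulrAC ler_pdivlMr ?ltr0n // -!natrM ler_nat.
Qed.

Lemma nat_frac_lt a b c d : (0 < b)%N -> (0 < d)%N ->
  (a%:R / b%:R < c%:R / d%:R :> R) = (a * d < c * b)%N.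
Proof.
by move=> b0 d0; rewrite ltr_pdivrMr ?ltr0n // mulrAC ltr_pdivlMr ?ltr0n // -!natrM ltr_nat.
Qed.
End Rho.

Section CommutativeMonoid.
Variables (T : Type) (mul : T -> T -> T) (e : T).
Hypotheses (mulC : forall a b, mul a b = mul b a)
  (mulA : forall a b c, mul a (mul b c) = mul (mul a b) c)
  (mul1 : forall a, mul e a = a).

Local Notation "a * b" := (mul a b).
Local Notation L S a := (lengths_in mul e S a).
Local Notation U S u := (is_unit_in mul e S u).
Local Notation At S u := (is_atom_in mul e S u).
Local Notation SM S := (submonoid mul e S).
Local Notation AllAt S s := (forall i, i < size s -> is_atom_in mul e S (nth e s i)).
Local Notation "a ^ n" := (mpow mul e a n).

Lemma mul_e a : a * e = a. Proof. by rewrite mulC mul1. Qed.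

Lemma mul_CA a b c : a * (b * c) = b * (a * c).
Proof. by rewrite mulA (mulC a b) -mulA. Qed.

Lemma mul_ACA a b c d : (a * b) * (c * d) = (a * c) * (b * d).
Proof. by rewrite -!mulA (mul_CA b c). Qed.

Lemma mprod_cat s t : mprod mul e (s ++ t) = mprod mul e s * mprod mul e t.
Proof. by elim: s => [|x s IH] /=; rewrite ?mul1 // IH mulA. Qed.

Lemma mpowS a k : a ^ k.+1 = a * a ^ k. Proof. by []. Qed.

Lemma mpowD a m n : a ^ (m + n) = a ^ m * a ^ n.
Proof. by elim: m => [|m IH]; rewrite ?mul1 // addSn !mpowS IH mulA. Qed.

Lemma submonoid_setT : SM setT. Proof. by []. Qed.

Lemma atoms_consE S x s : AllAt S (x :: s) -> At S x /\ AllAt S s.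
Proof. by move=> H; split; [apply: (H 0%N) | move=> i Hi; apply: (H i.+1)]. Qed.

Lemma atoms_cat S s t : AllAt S s -> AllAt S t -> AllAt S (s ++ t).
Proof.
move=> Hs Ht i; rewrite size_cat nth_cat => Hl.
case: (boolP (i < size s)%N) => Hi; first exact: Hs Hi.
by apply: Ht; rewrite ltn_subLR // leqNgt.
Qed.

Lemma unit_e S : SM S -> U S e.
Proof. by move=> [Se _]; split => //; exists e => //; rewrite mul1. Qed.

Lemma unit_mul S a b : SM S -> U S a -> U S b -> U S (a * b).
Proof.
move=> [_ SMm] [Sa [v Sv av]] [Sb [w Sw bw]]; split; first exact: SMm.
by exists (v * w); [exact: SMm | rewrite mul_ACA av bw mul1].
Qed.

Lemma unit_setT S u : U S u -> U setT u.
Proof. by move=> [_ [v _ H]]; split => //; exists v. Qed.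

Lemma unit_divisor a b : U setT (a * b) -> U setT a.
Proof. by move=> [_ [w _ H]]; split => //; exists (b * w); rewrite ?mulA. Qed.

Lemma len_unit S w : SM S -> U S w -> L S w 0.
Proof. by move=> SS Uw; exists w, [::]; split => //=; rewrite mul_e. Qed.

Lemma len_atom S u : SM S -> At S u -> L S u 1.
Proof.
move=> SS Au; exists e, [:: u]; split => //; first exact: unit_e.
- by move=> [|i].
- by rewrite /= mul_e mul1.
Qed.

Lemma len_mul S a b l l' : SM S -> L S a l -> L S b l' -> L S (a * b) (l + l').
Proof.
move=> SS [eps [s [Ue As <- ->]]] [eps' [t [Ue' At' <- ->]]].
exists (eps * eps'), (s ++ t); split.
- exact: unit_mul.
- exact: atoms_cat.
- by rewrite size_cat.
- by rewrite mprod_cat mul_ACA.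
Qed.

Lemma len_pow S u n : SM S -> At S u -> L S (u ^ n) n.
Proof.
move=> SS Au; elim: n => [|n IH]; first by apply: len_unit => //; apply: unit_e.
by rewrite mpowS -add1n; apply: len_mul => //; apply: len_atom.
Qed.

Lemma len_powM S c k l : SM S -> L S c l -> L S (c ^ k) (k * l)%N.
Proof.
move=> SS Hc; elim: k => [|k IH]; first by apply: len_unit => //; apply: unit_e.
by rewrite mpowS mulSn; apply: len_mul.
Qed.

Lemma len_transfer S S' a l : (forall u, U S u -> U S' u) ->
  (forall u, At S u -> At S' u) -> L S a l -> L S' a l.
Proof.
move=> HU HA [eps [s [Ue As <- ->]]]; exists eps, s; split => //; first exact: HU.
by move=> i Hi; apply: HA; apply: As.
Qed.

Lemma len0_unit a : L setT a 0 -> U setT a.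
Proof. by move=> [eps [s [Ue _ Hs ->]]]; case: s Hs => // _; rewrite /= mul_e. Qed.

Lemma len0_only a l : L setT a 0 -> L setT a l -> l = 0%N.
Proof.
move=> /len0_unit Ua [eps [[|v s] [Ue As <- Ha]]] //.
have [[_ nUv _] _] := atoms_consE As.
by exfalso; apply: nUv; rewrite Ha /= mul_CA in Ua; exact: unit_divisor Ua.
Qed.

Section DirectProduct.
Variables H1 H2 : set T.
Hypothesis idp : internal_direct_product mul e H1 H2.

Lemma dp_submonoid1 : SM H1. Proof. by case: idp. Qed.
Lemma dp_submonoid2 : SM H2. Proof. by case: idp. Qed.

Lemma dp_dec a : exists a1 a2, [/\ H1 a1, H2 a2 & a = a1 * a2].
Proof. by case: idp => _ _ /(_ a) [a1 [a2 [? ? ? _]]]; exists a1, a2. Qed.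

Lemma dp_uniq x1 x2 y1 y2 : H1 x1 -> H2 x2 -> H1 y1 -> H2 y2 ->
  x1 * x2 = y1 * y2 -> x1 = y1 /\ x2 = y2.
Proof.
move=> ? ? ? ? Hxy; case: idp => _ _ /(_ (x1 * x2)) [a1 [a2 [_ _ _ Hu]]].
have [-> ->] := Hu x1 x2 ltac:(done) ltac:(done) erefl.
by have [-> ->] := Hu y1 y2 ltac:(done) ltac:(done) Hxy.
Qed.

Lemma dp_swap : internal_direct_product mul e H2 H1.
Proof.
split; [exact: dp_submonoid2 | exact: dp_submonoid1 | move=> a].
have [a1 [a2 [h1 h2 Ha]]] := dp_dec a.
exists a2, a1; split => //; first by rewrite Ha mulC.
move=> b2 b1 hb2 hb1 Hb; rewrite mulC in Hb.
by have [-> ->] := dp_uniq hb1 hb2 h1 h2 (esym (etrans (esym Ha) Hb)).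
Qed.

(* An element of H1 that is a unit of H is a unit of H1: the H1-component of
   its inverse is an inverse. *)
Lemma unit_in_factor a : H1 a -> U setT a -> U H1 a.
Proof.
move=> Ha [_ [w _ aw]]; split => //.
have [w1 [w2 [h1 h2 Hw]]] := dp_dec w.
have [[H1e H1M] [H2e _]] := (dp_submonoid1, dp_submonoid2).
have := dp_uniq (H1M _ _ Ha h1) h2 H1e H2e.
by rewrite mul1 -mulA -Hw aw => /(_ erefl) [aw1 _]; exists w1.
Qed.

End DirectProduct.

Section DirectProductAtoms.
Variables H1 H2 : set T.
Hypothesis idp : internal_direct_product mul e H1 H2.
Let idp' := dp_swap idp.

Lemma atom_component v1 v2 : H1 v1 -> H2 v2 -> At setT (v1 * v2) -> U setT v1 ->
  U H1 v1 /\ At H2 v2.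
Proof.
move=> h1 h2 [_ nU Hat] Uv1; split; first exact: (unit_in_factor idp h1 Uv1).
split => //.
- by move=> /unit_setT Uv2; apply: nU; apply: unit_mul.
- move=> a b Ha Hb Hv2.
  have Hd : v1 * v2 = (v1 * a) * b by rewrite Hv2 mulA.
  case: (Hat _ _ I I Hd) => [Ua|Ub]; [left | right].
  + by apply: (unit_in_factor idp' Ha); rewrite mulC in Ua; apply: unit_divisor Ua.
  + exact: (unit_in_factor idp' Hb).
Qed.

Lemma atom_of_factor v : At H1 v -> At setT v.
Proof.
move=> [h1 nU Hat]; split => //; first by move=> /(unit_in_factor idp h1).
move=> a b _ _ Hv.
have [a1 [a2 [ha1 ha2 Ea]]] := dp_dec idp a.
have [b1 [b2 [hb1 hb2 Eb]]] := dp_dec idp b; subst a b.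
have [[_ H1M] [H2e H2M]] := (dp_submonoid1 idp, dp_submonoid2 idp).
rewrite mul_ACA in Hv.
have [E1 E2] := dp_uniq idp (H1M _ _ ha1 hb1) (H2M _ _ ha2 hb2) h1 H2e
  ltac:(by rewrite mul_e).
have Ua2 : U setT a2 by split => //; exists b2.
have Ub2 : U setT b2 by split => //; exists a2 => //; rewrite mulC.
have [Ua1|Ub1] := Hat a1 b1 ha1 hb1 (esym E1); [left | right].
- by apply: unit_mul => //; apply: unit_setT Ua1.
- by apply: unit_mul => //; apply: unit_setT Ub1.
Qed.

Lemma len_of_factor y l : L H1 y l -> L setT y l.
Proof. by apply: len_transfer => u; [exact: unit_setT | exact: atom_of_factor]. Qed.

End DirectProductAtoms.

Section DirectProductLengths.
Variables H1 H2 : set T.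
Hypothesis idp : internal_direct_product mul e H1 H2.
Let idp' := dp_swap idp.

Lemma atom_split v1 v2 : H1 v1 -> H2 v2 -> At setT (v1 * v2) ->
  (U H1 v1 /\ At H2 v2) \/ (At H1 v1 /\ U H2 v2).
Proof.
move=> h1 h2 Av; have [_ _ Hat] := Av.
have [] := Hat v1 v2 I I erefl => Uv; first by left; exact: (atom_component idp h1 h2 Av Uv).
right; rewrite mulC in Av.
by have [? ?] := atom_component idp' h2 h1 Av Uv.
Qed.

Lemma factorization_split s : forall eps y1 y2, U setT eps -> AllAt setT s ->
  H1 y1 -> H2 y2 -> y1 * y2 = eps * mprod mul e s ->
  exists a b, [/\ (a + b = size s)%N, L H1 y1 a & L H2 y2 b].
Proof.
have [SM1 SM2] := (dp_submonoid1 idp, dp_submonoid2 idp).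
elim: s => [|v s IH] eps y1 y2 Ue As h1 h2 /=.
  rewrite mul_e => Hy; exists 0%N, 0%N; split => //; apply: len_unit => //.
  - by apply: (unit_in_factor idp h1); rewrite -Hy in Ue; apply: unit_divisor Ue.
  - by apply: (unit_in_factor idp' h2); rewrite -Hy mulC in Ue; apply: unit_divisor Ue.
move=> Hy; have [Av As'] := atoms_consE As.
have [w1 [w2 [hw1 hw2 Hw]]] := dp_dec idp (eps * mprod mul e s).
have [a [b [Hab La Lb]]] := IH eps w1 w2 Ue As' hw1 hw2 (esym Hw).
have [v1 [v2 [hv1 hv2 Hv]]] := dp_dec idp v.
have [[_ H1M] [_ H2M]] := (SM1, SM2).
have [-> ->] := dp_uniq idp h1 h2 (H1M _ _ hv1 hw1) (H2M _ _ hv2 hw2)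
  ltac:(by rewrite Hy mul_CA Hw Hv mul_ACA).
rewrite Hv in Av; have [[Uv1 Av2]|[Av1 Uv2]] := atom_split hv1 hv2 Av.
- exists a, b.+1; split; first by rewrite addnS Hab.
  + by rewrite -(add0n a); apply: len_mul => //; apply: len_unit.
  + by rewrite -add1n; apply: len_mul => //; apply: len_atom.
- exists a.+1, b; split; first by rewrite addSn Hab.
  + by rewrite -add1n; apply: len_mul => //; apply: len_atom.
  + by rewrite -(add0n b); apply: len_mul => //; apply: len_unit.
Qed.

Lemma len_product y1 y2 g l : H1 y1 -> H2 y2 -> L H1 y1 = [set g] ->
  (L setT (y1 * y2) l <-> exists b, l = (g + b)%N /\ L H2 y2 b).
Proof.
move=> h1 h2 Hg; split.
- move=> [eps [s [Ue As <- Hy]]].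
  have [a [b [<- La Lb]]] := factorization_split Ue As h1 h2 Hy.
  by exists b; split => //; rewrite Hg in La; rewrite La.
- move=> [b [-> Lb]]; apply: len_mul => //.
  + by apply: (len_of_factor idp); rewrite Hg.
  + exact: (len_of_factor idp' Lb).
Qed.

End DirectProductLengths.

Section HalfFactorialFactor.
Variables H1 H2 : set T.
Hypotheses (idp : internal_direct_product mul e H1 H2)
  (hf : half_factorial_in mul e H1).

Lemma hf_atom a : H1 a -> ~ U H1 a -> exists u, At H1 u.
Proof.
move=> ha nU; have [l Hl] := hf ha.
have : L H1 a l by rewrite Hl.
move=> [eps [[|v s] [Ue As _ Ha]]].
- by exfalso; apply: nU; rewrite Ha /= mul_e.
- by exists v; have [] := atoms_consE As.
Qed.

Lemma len_shift u n x l : At H1 u ->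
  (L setT (u ^ n * x) l <-> exists l', l = (n + l')%N /\ L setT x l').
Proof.
move=> Au; have [SM1 [hu _ _]] := (dp_submonoid1 idp, Au).
have [x1 [x2 [h1 h2 ->]]] := dp_dec idp x.
have [al Hal] := hf h1.
have hun : H1 (u ^ n) by elim: n => [|n IH]; [case: SM1 | case: SM1 => _; apply].
have hp : H1 (u ^ n * x1) by case: SM1 => _; apply.
have [be Hbe] := hf hp.
have Lbe : (n + al)%N = be.
  have : L H1 (u ^ n * x1) (n + al) by apply: len_mul => //; [exact: len_pow | rewrite Hal].
  by rewrite Hbe.
rewrite mulA (len_product idp _ hp h2 Hbe); split.
- move=> [b [-> Lb]]; exists (al + b); split; first by rewrite -Lbe addnA.
  by apply/(len_product idp _ h1 h2 Hal); exists b.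
- move=> [l' [-> /(len_product idp _ h1 h2 Hal) [b [-> Lb]]]].
  by exists b; rewrite -Lbe addnA.
Qed.

Lemma len_complement a l : H2 a -> (L setT a l <-> L H2 a l).
Proof.
move=> h2; have [H1e _] := dp_submonoid1 idp.
have [g Hg] := hf H1e.
have L0 : L H1 e 0 by apply: len_unit (unit_e _); exact: dp_submonoid1 idp.
rewrite Hg in L0; rewrite -L0 in Hg.
rewrite -{1}(mul1 a) (len_product idp l H1e h2 Hg).
by split => [[b [->]] | H]; last exists l.
Qed.

(* If the lengths of x have extremes m <= M, those of u^n x are n + m and
   n + M, so rho(L(u^n x)) = (n + M)/(n + m): this is how fractions are
   realized as elasticities. *)
Lemma extremes_shift u n x m M : At H1 u -> has_extremes (L setT x) m M ->
  has_extremes (L setT (u ^ n * x)) (n + m) (n + M).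
Proof.
move=> Au [Lm LM Hb]; split; try by apply/len_shift => //; eexists; split.
by move=> l /len_shift [//|l' [-> /Hb]]; rewrite !leq_add2l.
Qed.

Lemma rho_shift (R : realType) u n x m M : At H1 u -> has_extremes (L setT x) m M ->
  (0 < n + m)%N -> rho R (L setT (u ^ n * x)) = ((n + M)%:R / (n + m)%:R)%R.
Proof. by move=> Au Hx; apply: rho_extremes; apply: extremes_shift. Qed.

End HalfFactorialFactor.

Section BFMonoid.
Hypothesis bf : forall a, finite_nat_set (L setT a) /\ L setT a !=set0.
Variable R : realType.

Lemma len_extremes a : L setT a = [set 0%N] \/
  exists m M, has_extremes (L setT a) m M /\ (0 < m)%N.
Proof.
have [[N HN] [l0 Hl0]] := bf a.
have [M [LM HM]] := ex_max_nat Hl0 HN.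
have [m [Lm Hm]] := ex_min_nat Hl0.
case: (posnP m) => [m0|mpos]; last first.
  by right; exists m, M; split => //; split => // l Hl; rewrite Hm ?HM.
left; rewrite m0 in Lm; apply/seteqP; split => x /=; last by move->.
exact: len0_only Lm.
Qed.

Lemma rho_ge1 a : (1 <= rho R (L setT a))%R.
Proof.
case: (len_extremes a) => [->|[m [M [[Lm LM Hb] m0]]]]; first by rewrite rho_0.
rewrite (rho_extremes _ (And3 Lm LM Hb)) // ler_pdivlMr ?ltr0n // mul1r ler_nat.
by case/andP: (Hb _ LM).
Qed.

(* As k L(c) is contained in L(c^k), the extremes of L(c^k) are the extremes
   of L(c) scaled by k, or further apart. *)
Lemma pow_extremes c k m M : (0 < k)%N -> has_extremes (L setT c) m M -> (0 < m)%N ->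
  exists mk Mk, [/\ has_extremes (L setT (c ^ k)) mk Mk, (0 < mk)%N,
    (mk <= k * m)%N & (k * M <= Mk)%N].
Proof.
move=> k0 [Lm LM _] m0.
have [Lkm LkM] := (len_powM k submonoid_setT Lm, len_powM k submonoid_setT LM).
case: (len_extremes (c ^ k)) => [HL|[mk [Mk [[Lmk LMk Hbk] mk0]]]].
  by rewrite HL /= in Lkm; move: Lkm => /eqP; rewrite muln_eq0 !gtn_eqF.
exists mk, Mk; split => //.
- by case/andP: (Hbk _ Lkm).
- by case/andP: (Hbk _ LkM).
Qed.

Lemma rho_pow_ge c k : (0 < k)%N -> (rho R (L setT c) <= rho R (L setT (mpow mul e c k)))%R.
Proof.
move=> k0; case: (len_extremes c) => [->|[m [M [Hc m0]]]].
  by rewrite rho_0 rho_ge1.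
have [mk [Mk [Hck mk0 le_mk le_Mk]]] := pow_extremes k0 Hc m0.
rewrite (rho_extremes _ Hc) // (rho_extremes _ Hck) // nat_frac_le //.
by apply: (@leq_trans (k * M * m)); [rewrite -mulnA mulnCA leq_mul2l le_mk orbT
  | rewrite leq_mul2r le_Mk orbT].
Qed.

Lemma pow_extremes_eq c k m M : (0 < k)%N -> has_extremes (L setT c) m M -> (0 < m)%N ->
  rho R (L setT (c ^ k)) = rho R (L setT c) -> has_extremes (L setT (c ^ k)) (k * m)%N (k * M)%N.
Proof.
move=> k0 Hc m0; have [mk [Mk [Hck mk0 le_mk le_Mk]]] := pow_extremes k0 Hc m0.
rewrite (rho_extremes _ Hc) // (rho_extremes _ Hck) //.
move/eqP; rewrite eqr_div ?pnatr_eq0 -?lt0n // -!natrM eqr_nat => /eqP E.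
have [_ LM Hb] := Hc; have /andP [le_mM _] := Hb _ LM.
have M0 : (0 < M)%N := leq_trans m0 le_mM.
have Emk : mk = (k * m)%N.
  apply/eqP; rewrite eqn_leq le_mk -(leq_pmul2l M0) -E /=.
  by rewrite mulnCA mulnA leq_mul2r le_Mk orbT.
have EMk : Mk = (k * M)%N by apply/eqP; rewrite -(eqn_pmul2r m0) E Emk mulnCA mulnA.
by rewrite -Emk -EMk.
Qed.

(* Accepted elasticity gives (b): an element c with rho(L(c)) = rho(H) has
   rho(L(c^k)) = rho(L(c)), as rho(L(c^k)) is squeezed between rho(L(c)) and
   rho(H). *)
Lemma accepted_cond_b : accepted_elasticity mul e R -> cond_b mul e R.
Proof.
move=> [c Hc] q q1 qlt; exists c => k k0; split; last by rewrite -lte_fin Hc.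
apply/eqP; rewrite eq_le rho_pow_ge // andbT -lee_fin Hc.
by apply: ereal_sup_ubound; exists (c ^ k).
Qed.

(* (a) and (b) give full elasticity: for q = r/s pick c from (b) with extremes
   m <= M of L(c); then L(c^(r-s)) has extremes (r-s)m and (r-s)M, and
   multiplying by u^n, n = sM - rm, for an atom u of H1 yields elasticity
   r(M - m)/s(M - m) = q. *)
Lemma fully_elastic_of_cond_a_b H1 H2 : cond_a mul e H1 H2 -> cond_b mul e R ->
  fully_elastic mul e R.
Proof.
move=> [idp hf [a0 [ha0 nU0]]] hb q q1 qlt.
have [u Au] := hf_atom hf ha0 nU0.
have [c Hc] := hb q q1 qlt.
have [r [s [s0 sr Eq]]] := rat_gt1_fraction R q1.
have [_ qc] := Hc 1%N isT; rewrite Eq in qc.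
case: (len_extremes c) => [HL|[m [M [Hm m0]]]].
  by move: qc; rewrite HL rho_0 ltr_pdivrMr ?ltr0n // mul1r ltr_nat ltnNge ltnW.
rewrite (rho_extremes _ Hm) // nat_frac_lt // in qc.
have k0 : (0 < r - s)%N by rewrite subn_gt0.
have [Hck _] := Hc _ k0.
have Hk := pow_extremes_eq k0 Hm m0 Hck.
exists (u ^ (s * M - r * m) * c ^ (r - s)).
rewrite Eq (rho_shift idp hf R Au Hk); last by rewrite addn_gt0 muln_gt0 k0 m0 orbT.
apply: nat_frac_eq => //; first by rewrite addn_gt0 muln_gt0 k0 m0 orbT.
nia.
Qed.

(* (a) and (b') give full elasticity: for q = r/s take a in H2 with extremes
   2 and 2(r - s) + 2 of L(a); multiplying by u^(2s - 2) yields elasticity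
   2r/2s = q. *)
Lemma fully_elastic_of_cond_a_b' H1 H2 : cond_a mul e H1 H2 -> cond_b' mul e H2 ->
  fully_elastic mul e R.
Proof.
move=> [idp hf [a0 [ha0 nU0]]] hb' q q1 _.
have [u Au] := hf_atom hf ha0 nU0.
have [r [s [s0 sr ->]]] := rat_gt1_fraction R q1.
have [a [ha2 [L2 Lm Hb]]] := hb' (2 * (r - s) + 2)%N ltac:(lia).
have Ha : has_extremes (L setT a) 2 (2 * (r - s) + 2)%N.
  split; try (by apply/(len_complement idp hf)).
  by move=> l /(len_complement idp hf _ ha2) /Hb.
exists (u ^ (2 * s - 2) * a).
rewrite (rho_shift idp hf R Au Ha) ?addn2 //.
apply: nat_frac_eq => //; nia.
Qed.

End BFMonoid.

Section CancellativePrime.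
Hypothesis bf : forall a, finite_nat_set (L setT a) /\ L setT a !=set0.
Variable p : T.
Hypotheses (pp : is_prime mul e p) (pc : cancellative mul p).

Local Notation Pp := [set a | exists n, a = p ^ n].
Local Notation Np := [set a | ~ divides mul p a].

Lemma prime_non_unit : ~ U setT p. Proof. by case: pp. Qed.

Lemma pow_cancel k x y : p ^ k * x = p ^ k * y -> x = y.
Proof.
elim: k => [|k IH]; first by rewrite !mul1.
by rewrite mpowS -!mulA => /pc /IH.
Qed.

Lemma pow_eq_e d : p ^ d = e -> d = 0%N.
Proof.
case: d => // d; rewrite mpowS => H.
by exfalso; apply: prime_non_unit; split => //; exists (p ^ d).
Qed.

Lemma pow_inj : injective (mpow mul e p).
Proof.
suff le_inj m n : (m <= n)%N -> p ^ m = p ^ n -> m = n.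
  by move=> m n E; case: (leqP m n) => [|/ltnW] mn; [|apply/esym]; apply: le_inj.
move=> mn; rewrite -(subnKC mn) mpowD -{1}(mul_e (p ^ m)).
by move=> /pow_cancel /esym /pow_eq_e ->; rewrite addn0.
Qed.

(* A prime is an atom: if p = a b then p divides a or b, and cancelling p
   shows that the other factor is a unit. *)
Lemma prime_atom : At setT p.
Proof.
split => //; first exact: prime_non_unit.
move=> a b _ _ Hp.
have [[z Hz]|[z Hz]] : divides mul p a \/ divides mul p b.
  by case: pp => _; apply; exists e; rewrite mul_e.
- right; split => //; exists z => //.
  have : p * (z * b) = p * e by rewrite mulA -Hz -Hp mul_e.
  by move/pc; rewrite mulC.
- left; split => //; exists z => //.
  have : p * (a * z) = p * e by rewrite mul_CA -Hz -Hp mul_e.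
  by move/pc; rewrite mulC.
Qed.

(* Existence of the p-adic valuation: the exponents n with p^n | a are
   bounded by the lengths of a, so a maximal one exists. *)
Lemma p_valuation a : exists n c, a = p ^ n * c /\ ~ divides mul p c.
Proof.
have [N HN] := (bf a).1.
have bounded n : divides mul (p ^ n) a -> (n <= N)%N.
  move=> [c Hc]; have [l Hl] := (bf c).2.
  have := len_mul submonoid_setT (len_pow n submonoid_setT prime_atom) Hl.
  by rewrite -Hc => /HN; apply: leq_trans; apply: leq_addr.
have [n [[c Hc] maxn]] := ex_max_nat (P := fun n => divides mul (p ^ n) a)
  (n0 := 0%N) ltac:(by exists a; rewrite mul1) bounded.
exists n, c; split => // [[c' Hc']].
have : (n.+1 <= n)%N by apply: maxn; exists c'; rewrite Hc Hc' mpowS mul_CA mulA.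
by rewrite ltnn.
Qed.

Lemma p_valuation_uniq m n x y : ~ divides mul p x -> ~ divides mul p y ->
  p ^ m * x = p ^ n * y -> m = n /\ x = y.
Proof.
suff lt_absurd i j u v : (i < j)%N -> ~ divides mul p u -> p ^ i * u = p ^ j * v -> False.
  move=> nx ny E; have mn : m = n.
    by case: (ltngtP m n) => // H; exfalso;
      [exact: lt_absurd H nx E | exact: lt_absurd H ny (esym E)].
  by subst m; split => //; exact: pow_cancel E.
move=> ij nu; rewrite -(subnKC (ltnW ij)) mpowD -mulA => /pow_cancel Hu.
apply: nu; move: Hu; rewrite -subn_gt0 in ij; case: (j - i)%N ij => // d _.
by rewrite mpowS -mulA => ->; exists (p ^ d * v).
Qed.

Lemma prime_direct_product : internal_direct_product mul e Pp Np.
Proof.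
split.
- split; first by exists 0%N.
  by move=> a b [m ->] [n ->]; exists (m + n)%N; rewrite mpowD.
- split; first by move=> [c Hc]; apply: prime_non_unit; split => //; exists c.
  by move=> a b /= na nb dab; case: pp => _ /(_ a b dab) [].
- move=> a; have [n [c [Ha nc]]] := p_valuation a.
  exists (p ^ n), c; split => //=; first by exists n.
  move=> b1 b2 [m ->] /= nb2; rewrite Ha => E.
  by have [-> ->] := p_valuation_uniq nb2 nc (esym E).
Qed.

Lemma free_unit x : U Pp x -> x = e.
Proof.
move=> [[k ->] [v [j ->] H]]; rewrite -mpowD in H.
by move: (pow_eq_e H) => /eqP; rewrite addn_eq0 => /andP [/eqP -> _].
Qed.

Lemma free_atom_p : At Pp p.
Proof.
split; first by exists 1%N; rewrite /= mul_e.
- by move/unit_setT; apply: prime_non_unit.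
- have Ue : U Pp e by split; [exists 0%N | exists e; [exists 0%N | rewrite mul1]].
  move=> a b [i ->] [j ->]; rewrite -mpowD => /esym Eij.
  have : (i + j = 1)%N by apply: pow_inj; rewrite Eij /= mul_e.
  by case: i j {Eij} => [|[|i]] [|j] //= _; [left | right].
Qed.

Lemma free_atom v : At Pp v -> v = p.
Proof.
move=> [[[|k] ->] nU Hat].
  by exfalso; apply: nU; split; [exists 0%N | exists e; [exists 0%N | rewrite mul1]].
have [Up|Uk] := Hat p (p ^ k) ltac:(by exists 1%N; rewrite /= mul_e) ltac:(by exists k) erefl.
- by exfalso; apply: prime_non_unit; apply: unit_setT Up.
- by rewrite mpowS (free_unit Uk) mul_e.
Qed.

(* Condition (a) for a cancellative prime: the factor generated by p is free,
   hence half-factorial, and it is not a group since p is not a unit. *)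
Lemma prime_cond_a : injective (mpow mul e p) /\ cond_a mul e Pp Np.
Proof.
split; first exact: pow_inj.
have SM1 : SM Pp by case: prime_direct_product.
split; first exact: prime_direct_product.
- move=> a [n ->]; exists n; apply/seteqP; split => l /=; last by move->; exact: len_pow free_atom_p.
  move=> [eps [s [Ue As <- Ha]]]; apply/esym/pow_inj.
  suff E : mprod mul e s = p ^ size s by rewrite Ha (free_unit Ue) mul1 E.
  elim: s As {Ha} => [|v s IH] //= As; have [Av As'] := atoms_consE As.
  by rewrite (free_atom Av) (IH As').
- by exists p; case: free_atom_p.
Qed.

End CancellativePrime.

End CommutativeMonoid.

Theorem proposition3p2 (R : realType) (T : Type) (mul : T -> T -> T) (e : T) :
  BF_monoid mul e ->
  (* (a) holds for a cancellative prime p, with H1 the free abelian monoid on p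
     and H2 = {a : p does not divide a} *)
  (forall p, is_prime mul e p -> cancellative mul p ->
     injective (mpow mul e p) /\
     cond_a mul e [set a | exists n, a = mpow mul e p n]
                  [set a | ~ divides mul p a]) /\
  (* (b) holds under accepted elasticity *)
  (accepted_elasticity mul e R -> cond_b mul e R) /\
  (* (a) and (b) imply fully elastic *)
  ((exists H1 H2, cond_a mul e H1 H2) -> cond_b mul e R -> fully_elastic mul e R) /\
  (* (a) and (b') imply fully elastic *)
  ((exists H1 H2, cond_a mul e H1 H2 /\ cond_b' mul e H2) -> fully_elastic mul e R).
Proof.
move=> [[mulC mulA mul1 _] bf]; split; [|split; [|split]].
- by move=> p; apply: prime_cond_a.
- exact: accepted_cond_b.
- by move=> [H1 [H2 Ha]]; apply: fully_elastic_of_cond_a_b Ha.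
- by move=> [H1 [H2 [Ha Hb']]]; apply: fully_elastic_of_cond_a_b' Ha Hb'.
Qed.
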